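(* Let $v>0$ and let $(a,r,s):\mathbb{R}\to\mathbb{R}^3$ be a solution, not identically constant, of $$\partial_\xi a=r,\qquad \partial_\xi r=-vr-\frac{sa}{2}+\frac{a|r|}{2},\qquad \partial_\xi s=-vs-ra$$ with $(a,r,s)(\xi)\to(a_0,0,0)$ as $\xi\to-\infty$ for some $a_0\in\mathbb{R}$. Then the trajectory is contained in $I_1\cup I_2\cup I_3\cup I_4$, where $I_1=\{r>0,\ s=2r\}$, $I_2=\{r>0,\ s=-r\}$, $I_3=\{r<0,\ s=r\}$, $I_4=\{r<0,\ s=-2r\}$. *)

From Stdlib Require Import Reals.
From Coquelicot Require Import Coquelicot.
Open Scope R_scope.

Definition in_I1 (r s : R) : Prop := r > 0 /\ s = 2 * r.
Definition in_I2 (r s : R) : Prop := r > 0 /\ s = - r.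
Definition in_I3 (r s : R) : Prop := r < 0 /\ s = r.
Definition in_I4 (r s : R) : Prop := r < 0 /\ s = - 2 * r.

From Stdlib Require Import Reals Lra Psatz.
From Coquelicot Require Import Coquelicot.
Open Scope R_scope.

(* Along solutions, Phi(r, s) = s^3 - 3 s r^2 - 2 |r|^3 = (s - 2|r|) (s + |r|)^2 satisfies
   Phi' = -3 v Phi, so Phi(xi) e^(3 v xi) is constant; it tends to 0 as xi -> -oo, hence
   Phi = 0 and s = 2|r| or s = -|r| everywhere.  On these branches |r'| <= (v + |a|) |r|,
   so by Gronwall a single zero of r forces r = 0, then s = 0 and a' = 0: the solution
   would be constant.  Thus r never vanishes, and the sign of r together with the branch
   of s gives I_1, ..., I_4. *)

Definition Phi (r s : R) : R := s ^ 3 - 3 * s * r ^ 2 - 2 * Rabs r ^ 3.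

Lemma Phi_factor (r s : R) : Phi r s = (s - 2 * Rabs r) * (s + Rabs r) ^ 2.
Proof. unfold Phi; rewrite <- (pow2_abs r); ring. Qed.

Lemma Phi_eq0 (r s : R) : Phi r s = 0 -> s = 2 * Rabs r \/ s = - Rabs r.
Proof.
rewrite Phi_factor; intros H.
destruct (Rmult_integral _ _ H) as [H1 | H2]; [left; lra |].
right; assert (s + Rabs r = 0) by (apply Rsqr_0_uniq; unfold Rsqr; simpl in H2; lra); lra.
Qed.

Lemma is_derive_Rabs_pow3 (x : R) :
  is_derive (fun t => Rabs t ^ 3) x (3 * Rabs x * x).
Proof.
destruct (Req_dec x 0) as [-> | Hx].
- apply is_derive_Reals; intros eps Heps.
  exists (mkposreal (Rmin 1 eps) (Rmin_pos _ _ Rlt_0_1 Heps)); intros h Hh0 Hh.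
  simpl in Hh; pose proof (Rmin_l 1 eps); pose proof (Rmin_r 1 eps).
  pose proof (Rabs_pos_lt h Hh0).
  replace ((Rabs (0 + h) ^ 3 - Rabs 0 ^ 3) / h - 3 * Rabs 0 * 0) with (Rabs h * h).
  2: { rewrite Rplus_0_l, Rabs_R0.
       replace (Rabs h ^ 3) with (Rabs h * h ^ 2) by (rewrite <- (pow2_abs h); ring).
       field; exact Hh0. }
  rewrite Rabs_mult, Rabs_Rabsolu; nra.
- replace (3 * Rabs x * x) with (INR 3 * (sign x * 1) * Rabs x ^ Nat.pred 3).
  + apply (is_derive_pow (fun t => Rabs t)), (is_derive_Rabs (fun t => t) x 1);
      [exact (is_derive_id x) | exact Hx].
  + destruct (Rlt_or_le x 0).
    * rewrite sign_eq_m1, Rabs_left by lra; simpl; ring.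
    * rewrite sign_eq_1, Rabs_right by lra; simpl; ring.
Qed.

Lemma continuous_Rabs_pow3 (x : R) : continuous (fun t => Rabs t ^ 3) x.
Proof.
apply (ex_derive_continuous (V := R_NormedModule)); eexists; apply is_derive_Rabs_pow3.
Qed.

Lemma is_lim_Phi (r s : R -> R) (x : Rbar) (lr ls : R) :
  is_lim r x lr -> is_lim s x ls -> is_lim (fun y => Phi (r y) (s y)) x (Phi lr ls).
Proof.
intros Hr Hs; unfold Phi.
apply is_lim_minus'; [apply is_lim_minus' |].
- apply (is_lim_comp_continuous s (fun t => t ^ 3)); [exact Hs |].
  apply (ex_derive_continuous (V := R_NormedModule)); auto_derive; exact I.
- apply (is_lim_mult _ _ _ (3 * ls) (lr ^ 2)); [| | exact I].
  + apply (is_lim_scal_l s 3 x ls Hs).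
  + apply (is_lim_comp_continuous r (fun t => t ^ 2)); [exact Hr |].
    apply (ex_derive_continuous (V := R_NormedModule)); auto_derive; exact I.
- apply (is_lim_scal_l (fun y => Rabs (r y) ^ 3) 2 x (Rabs lr ^ 3)).
  apply (is_lim_comp_continuous r (fun t => Rabs t ^ 3)); [exact Hr |].
  apply continuous_Rabs_pow3.
Qed.

Lemma const_of_is_derive_0 (f : R -> R) :
  (forall x, is_derive f x 0) -> forall x y, f x = f y.
Proof.
intros Hf x y; destruct (Rtotal_order x y) as [Hxy | [-> | Hxy]]; [| reflexivity |].
- now apply eq_is_derive.
- symmetry; now apply eq_is_derive.
Qed.

Lemma is_lim_exp_scal_m_infty (c : R) : 0 < c -> is_lim (fun y => exp (c * y)) m_infty 0.
Proof.
intros Hc; apply (is_lim_comp exp (fun y => c * y) m_infty 0 m_infty).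
- exact is_lim_exp_m.
- replace m_infty with (Rbar_mult c m_infty) at 2.
  + apply is_lim_scal_l, is_lim_id.
  + simpl; destruct Rle_dec; [destruct Rle_lt_or_eq_dec |]; auto; lra.
- exists 0; discriminate.
Qed.

Lemma exp_decay_zero (f : R -> R) (c l : R) :
  0 < c -> (forall x, is_derive f x (- c * f x)) -> is_lim f m_infty l ->
  forall x, f x = 0.
Proof.
intros Hc Hf Hl x.
set (g y := f y * exp (c * y)).
assert (Hg : forall y, is_derive g y 0).
{ intros y.
  replace 0 with (plus (mult (- c * f y) (exp (c * y))) (mult (f y) (c * exp (c * y))))
    by (unfold plus, mult; simpl; unfold mult; simpl; ring).
  apply (is_derive_mult f (fun y => exp (c * y))); [apply Hf | | apply Rmult_comm].
  auto_derive; [exact I | ring]. }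
assert (Hlim : is_lim g m_infty 0).
{ rewrite <- (Rmult_0_r l); apply (is_lim_mult f _ m_infty l 0 Hl); [| exact I].
  now apply is_lim_exp_scal_m_infty. }
assert (Hgx : g x = 0).
{ apply (is_lim_ext g (fun _ => g x)) in Hlim; [| intros y; apply const_of_is_derive_0, Hg].
  apply is_lim_unique in Hlim; rewrite Lim_const in Hlim; now injection Hlim. }
unfold g in Hgx; pose proof (exp_pos (c * x)); nra.
Qed.

Lemma nonincreasing_of_derive_nonpos (h dh : R -> R) (x y : R) :
  x <= y -> (forall t, x <= t <= y -> is_derive h t (dh t)) ->
  (forall t, x <= t <= y -> dh t <= 0) -> h y <= h x.
Proof.
intros Hxy Hh Hdh; destruct (Rle_lt_or_eq_dec _ _ Hxy) as [Hlt | ->]; [| lra].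
destruct (MVT_cor2 h dh x y Hlt) as [c [Hc Hcxy]].
- intros c Hc; apply is_derive_Reals, Hh, Hc.
- pose proof (Hdh c ltac:(lra)); nra.
Qed.

Lemma gronwall_zero_forward (f df : R -> R) (K x y : R) :
  (forall t, is_derive f t (df t)) -> f x = 0 -> x <= y ->
  (forall t, x <= t <= y -> Rabs (df t) <= K * Rabs (f t)) -> f y = 0.
Proof.
intros Hf Hx Hxy Hb.
set (h t := f t ^ 2 * exp (- 2 * K * t)).
assert (Hhyx : h y <= h x).
{ apply (nonincreasing_of_derive_nonpos h
           (fun t => 2 * (f t * df t - K * f t ^ 2) * exp (- 2 * K * t))); [exact Hxy | |].
  - intros t _; unfold h; auto_derive; [now exists (df t) |].
    replace (Derive (fun u => f u) t) with (df t) by (symmetry; apply is_derive_unique, Hf).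
    ring.
  - intros t Ht.
    assert (f t * df t <= K * f t ^ 2).
    { rewrite <- pow2_abs; apply (Rle_trans _ (Rabs (f t) * Rabs (df t))).
      - rewrite <- Rabs_mult; apply Rle_abs.
      - specialize (Hb t Ht); pose proof (Rabs_pos (f t)); nra. }
    pose proof (exp_pos (- 2 * K * t)); nra. }
unfold h in Hhyx; rewrite Hx in Hhyx; pose proof (exp_pos (- 2 * K * y)).
apply Rsqr_0_uniq; unfold Rsqr; simpl in Hhyx; nra.
Qed.

Lemma gronwall_zero (f df : R -> R) (K x y : R) :
  (forall t, is_derive f t (df t)) -> f x = 0 ->
  (forall t, Rmin x y <= t <= Rmax x y -> Rabs (df t) <= K * Rabs (f t)) -> f y = 0.
Proof.
intros Hf Hx Hb; destruct (Rle_or_lt x y) as [Hxy | Hyx].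
- apply (gronwall_zero_forward f df K x y Hf Hx Hxy).
  now rewrite Rmin_left, Rmax_right in Hb.
- rewrite <- (Ropp_involutive y).
  apply (gronwall_zero_forward (fun t => f (- t)) (fun t => - df (- t)) K (- x)); [| | lra |].
  + intros t; auto_derive; [now exists (df (- t)) |].
    replace (Derive (fun u => f u) (- t)) with (df (- t))
      by (symmetry; apply is_derive_unique, Hf).
    ring.
  + now rewrite Ropp_involutive.
  + intros t Ht; rewrite Rabs_Ropp; apply Hb.
    rewrite Rmin_right, Rmax_left by lra; lra.
Qed.

Lemma is_derive_Phi (r s : R -> R) (x dr ds : R) :
  is_derive r x dr -> is_derive s x ds ->
  is_derive (fun y => Phi (r y) (s y)) x
    (3 * (s x ^ 2 - r x ^ 2) * ds - 6 * (s x + Rabs (r x)) * r x * dr).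
Proof.
intros Hr Hs; set (g t := Rabs t ^ 3).
change (is_derive (fun y => s y ^ 3 - 3 * s y * r y ^ 2 - 2 * g (r y)) x
          (3 * (s x ^ 2 - r x ^ 2) * ds - 6 * (s x + Rabs (r x)) * r x * dr)).
assert (Hg : is_derive g (r x) (3 * Rabs (r x) * r x)) by apply is_derive_Rabs_pow3.
auto_derive.
- repeat split; eexists; eassumption.
- replace (Derive (fun u => s u) x) with ds by (symmetry; now apply is_derive_unique).
  replace (Derive (fun u => r u) x) with dr by (symmetry; now apply is_derive_unique).
  replace (Derive (fun u => g u) (r x)) with (3 * Rabs (r x) * r x)
    by (symmetry; now apply is_derive_unique).
  ring.
Qed.

Lemma Rabs_rhs_r_le (v a r s : R) :
  s = 2 * Rabs r \/ s = - Rabs r ->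
  Rabs (- v * r - s * a / 2 + a * Rabs r / 2) <= (Rabs v + Rabs a) * Rabs r.
Proof. intros [-> | ->]; split_Rabs; nra. Qed.

Lemma continuous_bounded_on_segment (f : R -> R) (x y : R) :
  (forall t, continuity_pt f t) -> exists M, forall t, x <= t <= y -> Rabs (f t) <= M.
Proof.
intros Hf; destruct (Rle_or_lt x y) as [Hxy | Hyx].
- destruct (continuity_ab_maj (fun t => Rabs (f t)) x y Hxy) as [m [Hm _]].
  + intros t _; apply (continuity_pt_comp f Rabs); [apply Hf | apply Rcontinuity_abs].
  + now exists (Rabs (f m)).
- exists 0; intros t Ht; lra.
Qed.

Section Solution.

Variables (v : R) (a r s : R -> R).
Hypothesis Ha : forall xi, is_derive a xi (r xi).
Hypothesis Hr :
  forall xi, is_derive r xi (- v * r xi - s xi * a xi / 2 + a xi * Rabs (r xi) / 2).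
Hypothesis Hs : forall xi, is_derive s xi (- v * s xi - r xi * a xi).

Lemma is_derive_Phi_solution (xi : R) :
  is_derive (fun y => Phi (r y) (s y)) xi (- (3 * v) * Phi (r xi) (s xi)).
Proof.
(* With t = |r| treated as an independent variable, the identity holds modulo t^2 = r^2. *)
set (t := Rabs (r xi)).
replace (- (3 * v) * Phi (r xi) (s xi))
  with (3 * (s xi ^ 2 - r xi ^ 2) * (- v * s xi - r xi * a xi)
        - 6 * (s xi + t) * r xi * (- v * r xi - s xi * a xi / 2 + a xi * t / 2)
        - (6 * v * t + 3 * a xi * r xi) * (r xi ^ 2 - t ^ 2))
  by (unfold Phi; fold t; field).
unfold t; rewrite pow2_abs, Rminus_diag, Rmult_0_r, Rminus_0_r.
exact (is_derive_Phi r s xi _ _ (Hr xi) (Hs xi)).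
Qed.

Lemma Phi_solution_eq0 :
  v > 0 -> is_lim r m_infty 0 -> is_lim s m_infty 0 -> forall xi, Phi (r xi) (s xi) = 0.
Proof.
intros Hv Hr0 Hs0; apply (exp_decay_zero _ (3 * v) (Phi 0 0)); [lra | |].
- apply is_derive_Phi_solution.
- now apply is_lim_Phi.
Qed.

Lemma r_eq0_everywhere (x : R) :
  (forall xi, s xi = 2 * Rabs (r xi) \/ s xi = - Rabs (r xi)) -> r x = 0 ->
  forall y, r y = 0.
Proof.
intros Hsr Hx y.
destruct (continuous_bounded_on_segment a (Rmin x y) (Rmax x y)) as [M HM].
{ intros t; apply continuity_pt_filterlim, (ex_derive_continuous (V := R_NormedModule)).
  now exists (r t). }
apply (gronwall_zero r _ (Rabs v + M) x y Hr Hx).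
intros t Ht; apply (Rle_trans _ _ _ (Rabs_rhs_r_le _ _ _ _ (Hsr t))).
apply Rmult_le_compat_r; [apply Rabs_pos | specialize (HM t Ht); lra].
Qed.

Lemma solution_const_of_r_eq0 (x : R) :
  (forall xi, s xi = 2 * Rabs (r xi) \/ s xi = - Rabs (r xi)) -> r x = 0 ->
  forall y z, (a y, r y, s y) = (a z, r z, s z).
Proof.
intros Hsr Hx.
assert (Hr0 := r_eq0_everywhere x Hsr Hx).
assert (Hs0 : forall y, s y = 0).
{ intros y; destruct (Hsr y) as [-> | ->]; rewrite Hr0, Rabs_R0; ring. }
assert (Ha_const : forall y z, a y = a z).
{ apply const_of_is_derive_0; intros y; rewrite <- (Hr0 y); apply Ha. }
intros y z; now rewrite (Ha_const y z), !Hr0, !Hs0.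
Qed.

End Solution.

Theorem lemma5 (v : R) (a r s : R -> R) (a0 : R) :
  v > 0 ->
  (forall xi, is_derive a xi (r xi)) ->
  (forall xi, is_derive r xi (- v * r xi - s xi * a xi / 2 + a xi * Rabs (r xi) / 2)) ->
  (forall xi, is_derive s xi (- v * s xi - r xi * a xi)) ->
  filterlim a (Rbar_locally m_infty) (locally a0) ->
  filterlim r (Rbar_locally m_infty) (locally 0) ->
  filterlim s (Rbar_locally m_infty) (locally 0) ->
  (exists xi1 xi2, (a xi1, r xi1, s xi1) <> (a xi2, r xi2, s xi2)) ->
  forall xi, in_I1 (r xi) (s xi) \/ in_I2 (r xi) (s xi)
          \/ in_I3 (r xi) (s xi) \/ in_I4 (r xi) (s xi).
Proof.
intros Hv Ha Hr Hs _ Hr0 Hs0 [xi1 [xi2 Hnonconst]] xi.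
assert (Hsr : forall x, s x = 2 * Rabs (r x) \/ s x = - Rabs (r x)).
{ intros x; apply Phi_eq0, (Phi_solution_eq0 v a r s Hr Hs Hv Hr0 Hs0). }
assert (Hr_neq0 : r xi <> 0).
{ intros Hxi; apply Hnonconst, (solution_const_of_r_eq0 v a r s Ha Hr xi Hsr Hxi). }
unfold in_I1, in_I2, in_I3, in_I4.
pose proof (Hsr xi) as Hs_xi; destruct (Rlt_or_le (r xi) 0).
- rewrite Rabs_left in Hs_xi by lra; lra.
- rewrite Rabs_right in Hs_xi by lra; lra.
Qed.
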